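(* Let $G$ be a group with a finite generating set $S$ (with $S=S^{-1}$ and $e\notin S$). Suppose $\kappa(a)=0$ for all $a\in S$. Then $G$ is virtually abelian.
   Context: For a group $G$ with finite generating set $S$ ($S=S^{-1}$, $e\notin S$), $|x|$ denotes the word length of $x\in G$ with respect to $S$. For $g\in G$ define $\mathrm{Av}(g)=\frac{1}{|S|}\sum_{a\in S}|a^{-1}ga|$, and for $g\neq e$ define the curvature $\kappa(g)=\frac{|g|-\mathrm{Av}(g)}{|g|}$. *)

From Stdlib Require Import List ClassicalEpsilon.
From mathcomp Require Import all_boot all_order all_algebra.
Set Implicit Arguments. Unset Strict Implicit. Unset Printing Implicit Defensive.
Import Order.TTheory GRing.Theory Num.Theory.

Record is_group (G : Type) (mul : G -> G -> G) (inv : G -> G) (e : G) : Prop := {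
  grp_assoc : forall x y z, mul x (mul y z) = mul (mul x y) z;
  grp_idl : forall x, mul e x = x;
  grp_idr : forall x, mul x e = x;
  grp_invl : forall x, mul (inv x) x = e;
  grp_invr : forall x, mul x (inv x) = e }.

Section Words.
Variables (G : Type) (mul : G -> G -> G) (inv : G -> G) (e : G) (S : list G).

Definition word_eval (w : list G) : G := fold_right mul e w.

Definition spelled_by (x : G) (n : nat) : Prop :=
  exists w : list G, List.length w = n /\ (forall a, List.In a w -> List.In a S)
                     /\ word_eval w = x.

Definition symmetric_gen_set : Prop :=
  List.NoDup S /\ (forall a, List.In a S -> List.In (inv a) S) /\ ~ List.In e S /\
  (forall x : G, exists n, spelled_by x n).

Definition word_length (x : G) : nat :=
  epsilon (inhabits 0%N)
    (fun n => spelled_by x n /\ forall m, spelled_by x m -> (n <= m)%coq_nat).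

Local Open Scope ring_scope.

Definition Av (g : G) : rat :=
  (\sum_(a <- S) (word_length (mul (mul (inv a) g) a))%:R) / (List.length S)%:R.

Definition curvature (g : G) : rat :=
  ((word_length g)%:R - Av g) / (word_length g)%:R.

End Words.

Definition is_subgroup (G : Type) (mul : G -> G -> G) (inv : G -> G) (e : G)
  (H : G -> Prop) : Prop :=
  H e /\ (forall x y, H x -> H y -> H (mul x y)) /\ (forall x, H x -> H (inv x)).

(* G is virtually abelian: it has an abelian subgroup of finite index
   (finitely many left cosets t H cover G) *)
Definition virtually_abelian (G : Type) (mul : G -> G -> G) (inv : G -> G) (e : G)
  : Prop :=
  exists H : G -> Prop,
    is_subgroup mul inv e H /\
    (forall x y, H x -> H y -> mul x y = mul y x) /\
    exists T : list G, forall g, exists t h, List.In t T /\ H h /\ g = mul t h.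

(** Zero curvature at a generator a says that Av(a) = |a| = 1, i.e. every
    conjugate b^-1 a b (b in S) again has length 1 and therefore lies in S.
    Hence S is invariant under conjugation by the whole group, and G acts on
    the finite set S. Two elements inducing the same permutation of S differ by
    an element centralizing S, i.e. by a central element; so the centre, which
    is abelian, has at most |S|^|S| cosets. *)
From Stdlib Require Import List ClassicalEpsilon Classical Wf_nat Lia.
From mathcomp Require Import all_boot all_algebra zify.
Set Implicit Arguments. Unset Strict Implicit.
Import GRing.Theory Num.Theory.

Lemma ex_least_nat (P : nat -> Prop) :
  (exists n, P n) -> exists n, P n /\ forall m, P m -> (n <= m)%coq_nat.
Proof.
move=> exP; have [n [n_least _]] :=
  dec_inh_nat_subset_has_unique_least_element P (fun n => classic (P n)) exP.
by exists n.
Qed.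

Lemma size_le_sum (T : Type) (f : T -> nat) (s : list T) :
  (forall x, List.In x s -> 0 < f x)%N -> (size s <= \sum_(x <- s) f x)%N.
Proof.
elim: s => [|b s IH] f_gt0 //; rewrite big_cons /=.
have := f_gt0 b (or_introl erefl); have := IH (fun y sy => f_gt0 y (or_intror sy)).
lia.
Qed.

Lemma sum_eq_size_all1 (T : Type) (f : T -> nat) (s : list T) :
  (forall x, List.In x s -> 0 < f x)%N -> \sum_(x <- s) f x = size s ->
  forall x, List.In x s -> f x = 1.
Proof.
elim: s => [|b s IH] f_gt0 //; rewrite big_cons /= => sum_eq x sx.
have f_gt0_s y (sy : List.In y s) := f_gt0 y (or_intror sy).
have := f_gt0 b (or_introl erefl); have := size_le_sum f_gt0_s.
case: sx => [<-|sx]; first lia.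
by move=> *; apply: IH => //; lia.
Qed.

Fixpoint words (A : Type) (S : list A) (n : nat) : list (list A) :=
  match n with
  | 0 => [:: [::]]
  | n.+1 => flat_map (fun w => List.map (fun a => a :: w) S) (words S n)
  end.

Lemma In_words (A : Type) (S : list A) (w : list A) :
  (forall x, List.In x w -> List.In x S) -> List.In w (words S (List.length w)).
Proof.
elim: w => [|a w IH] wS /=; first by left.
apply/in_flat_map; exists w; split; first by apply: IH => x wx; apply: wS; right.
by apply/in_map_iff; exists a; split => //; apply: wS; left.
Qed.

Section Group.

Variables (G : Type) (mul : G -> G -> G) (inv : G -> G) (e : G).
Hypothesis HG : is_group mul inv e.

Definition conjg (g x : G) : G := mul (mul g x) (inv g).

Definition central (x : G) : Prop := forall g, mul x g = mul g x.

Lemma mulKg x y : mul (inv x) (mul x y) = y.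
Proof. by rewrite (grp_assoc HG) (grp_invl HG) (grp_idl HG). Qed.

Lemma mulKVg x y : mul x (mul (inv x) y) = y.
Proof. by rewrite (grp_assoc HG) (grp_invr HG) (grp_idl HG). Qed.

Lemma invgK x : inv (inv x) = x.
Proof. by rewrite -[RHS](mulKg (inv x)) (grp_invl HG) (grp_idr HG). Qed.

Lemma invgM x y : inv (mul x y) = mul (inv y) (inv x).
Proof.
rewrite -[RHS](grp_idr HG) -(grp_invr HG (mul x y)) -!(grp_assoc HG) mulKg.
by rewrite (grp_assoc HG (inv y)) (grp_invl HG) (grp_idl HG).
Qed.

Lemma conjg1 x : conjg e x = x.
Proof. by rewrite /conjg -[inv e](grp_idl HG) (grp_invr HG) !(grp_idr HG) (grp_idl HG). Qed.

Lemma conjMg g h x : conjg (mul g h) x = conjg g (conjg h x).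
Proof. by rewrite /conjg invgM -!(grp_assoc HG). Qed.

Lemma conjg_eq1 g x : conjg g x = e -> x = e.
Proof.
rewrite /conjg => /(congr1 (mul^~ g)); rewrite -(grp_assoc HG) (grp_invl HG).
by rewrite (grp_idr HG) (grp_idl HG) => gxg; rewrite -(mulKg g x) gxg (grp_invl HG).
Qed.

Lemma conjg_eq_commute g t x :
  conjg g x = conjg t x -> mul (mul (inv t) g) x = mul x (mul (inv t) g).
Proof.
rewrite /conjg => /(congr1 (fun z => mul (inv t) (mul z g))).
by rewrite -!(grp_assoc HG) mulKg (grp_invl HG) (grp_idr HG).
Qed.

Lemma central_subgroup : is_subgroup mul inv e central.
Proof.
split; first by move=> g; rewrite (grp_idl HG) (grp_idr HG).
split=> [x y cx cy g | x cx g].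
  by rewrite -(grp_assoc HG) cy (grp_assoc HG) cx (grp_assoc HG).
have := congr1 (fun z => mul (inv x) (mul z (inv x))) (cx g).
by rewrite -!(grp_assoc HG) mulKg (grp_invr HG) (grp_idr HG) => ->.
Qed.

Lemma finite_index_of_finite_image (B : Type) (H : G -> Prop) (f : G -> B) (L : list B) :
  (forall g, List.In (f g) L) -> (forall g t, f g = f t -> H (mul (inv t) g)) ->
  exists T : list G, forall g, exists t h, List.In t T /\ H h /\ g = mul t h.
Proof.
move=> fL f_fibre; pose rep b := epsilon (inhabits e) (fun t => f t = b).
have f_rep g : f (rep (f g)) = f g.
  by apply: (epsilon_spec (inhabits e) (fun t => f t = f g)); exists g.
exists (List.map rep L) => g; exists (rep (f g)), (mul (inv (rep (f g))) g).
split; first exact: in_map (fL g).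
by split; [apply: f_fibre; rewrite f_rep | rewrite mulKVg].
Qed.

Variable S : list G.
Hypothesis HS : symmetric_gen_set mul inv e S.

Lemma gen_ind (P : G -> Prop) :
  P e -> (forall a x, List.In a S -> P x -> P (mul a x)) -> forall g, P g.
Proof.
move=> Pe PM g; have [_ [_ [_ gen]]] := HS; have [n [w [_ [wS <-]]]] := gen g.
elim: w wS => [|a w IH] wS //=.
by apply: PM; [apply: wS; left | apply: IH => x wx; apply: wS; right].
Qed.

Lemma central_of_commute_gen x :
  (forall a, List.In a S -> mul x a = mul a x) -> central x.
Proof.
move=> xS; apply: gen_ind => [|a g Sa xg]; first by rewrite (grp_idl HG) (grp_idr HG).
by rewrite (grp_assoc HG) xS // -!(grp_assoc HG) xg.
Qed.

Lemma conjg_gen_closed :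
  (forall a b, List.In a S -> List.In b S -> List.In (conjg b a) S) ->
  forall g a, List.In a S -> List.In (conjg g a) S.
Proof.
move=> closedS; apply: gen_ind => [a Sa | b g Sb gS a Sa]; first by rewrite conjg1.
by rewrite conjMg; apply: closedS => //; apply: gS.
Qed.

Lemma word_length_spec x :
  spelled_by mul e S x (word_length mul e S x) /\
  forall m, spelled_by mul e S x m -> (word_length mul e S x <= m)%coq_nat.
Proof.
have [_ [_ [_ gen]]] := HS.
exact: (epsilon_spec (inhabits 0%N) _ (ex_least_nat (gen x))).
Qed.

Lemma word_length_gt0 x : x <> e -> (0 < word_length mul e S x)%N.
Proof.
move=> xn1; have [[w [w0 [_ wx]]] _] := word_length_spec x.
by case: w w0 wx => [|a w] <- //= ex; case: xn1.
Qed.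

Lemma word_length_eq1 x : word_length mul e S x = 1 -> List.In x S.
Proof.
move=> lx1; have [[w [w1 [wS wx]]] _] := word_length_spec x; rewrite lx1 in w1.
case: w w1 wS wx => [|a [|? ?]] //= _ wS; rewrite (grp_idr HG) => <-.
by apply: wS; left.
Qed.

Lemma word_length_gen a : List.In a S -> word_length mul e S a = 1.
Proof.
move=> Sa; have [_ [_ [eNS _]]] := HS; have [_ minimal] := word_length_spec a.
have /minimal : spelled_by mul e S a 1.
  by exists [:: a]; split; [|split=> [b [<-|[]]|] //=; rewrite (grp_idr HG)].
have : a <> e by move=> ae; apply: eNS; rewrite -ae.
by move/word_length_gt0; lia.
Qed.

Local Open Scope ring_scope.

Lemma curvature0_Av g : g <> e -> curvature mul inv e S g = 0 ->
  Av mul inv e S g = (word_length mul e S g)%:R.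
Proof.
move=> /word_length_gt0 lg_gt0 /eqP; rewrite /curvature mulf_eq0 invr_eq0 pnatr_eq0.
by rewrite (negbTE (lt0n_neq0 lg_gt0)) orbF subr_eq0 => /eqP.
Qed.

Lemma curvature0_conj_gen a b : List.In a S -> List.In b S ->
  curvature mul inv e S a = 0 -> List.In (conjg b a) S.
Proof.
move=> Sa Sb /(curvature0_Av _); have [_ [Sinv [eNS _]]] := HS.
have an1 : a <> e by move=> ae; apply: eNS; rewrite -ae.
move=> /(_ an1); rewrite word_length_gen // /Av.
have S_n0 : (List.length S)%:R != 0 :> rat by rewrite pnatr_eq0; case: (S) Sa.
move/(canRL (divfK S_n0)); rewrite mul1r -natr_sum => /eqP; rewrite eqr_nat => /eqP.
have conjg_gt0 c : (0 < word_length mul e S (mul (mul (inv c) a) c))%N.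
  apply: word_length_gt0 => aconj1; apply: an1; apply: (conjg_eq1 (g := inv c)).
  by rewrite /conjg invgK.
move/(sum_eq_size_all1 (fun c _ => conjg_gt0 c))/(_ (inv b) (Sinv b Sb)).
by rewrite invgK; apply: word_length_eq1.
Qed.

End Group.

Local Open Scope ring_scope.

Theorem mainTheorem1 (G : Type) (mul : G -> G -> G) (inv : G -> G) (e : G)
  (S : list G) :
  is_group mul inv e ->
  symmetric_gen_set mul inv e S ->
  (forall a, List.In a S -> curvature mul inv e S a = 0) ->
  virtually_abelian mul inv e.
Proof.
move=> HG HS curv0.
have conjS : forall g a, List.In a S -> List.In (conjg mul inv g a) S.
  apply: (conjg_gen_closed HG HS) => a b Sa Sb.
  exact: (curvature0_conj_gen HG HS Sa Sb (curv0 a Sa)).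
exists (central mul); split; first exact: central_subgroup.
split; first by move=> x y cx _; apply: cx.
apply: (finite_index_of_finite_image HG (f := fun g => List.map (conjg mul inv g) S)
  (L := words S (List.length S))) => [g | g t gt].
  rewrite -[in words _ _](length_map (conjg mul inv g)); apply: In_words.
  by move=> x /in_map_iff [a [<- Sa]]; apply: conjS.
apply: (central_of_commute_gen HG HS) => a Sa; apply: (conjg_eq_commute HG).
by move/map_ext_in_iff: gt; apply.
Qed.
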